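(* Let $(\mathfrak{A},\mathfrak{A}_0)$ be a CQ*-algebra as in the context, let $H=H^*\in\mathfrak{A}$ and $\omega\in E(\mathfrak{A}_0)$, and suppose $\overline{\omega}$ is a ground state for $H$ with eigenvalue $\alpha_*$. Then: (1) $-i\,\overline{\omega}(A^*\delta_H(A))\ge0$ for all $A\in\mathfrak{A}_0$; (2) $\overline{\omega}(\delta_H(A))=0$ for all $A\in\mathfrak{A}_0$; (3) $\alpha_*=\min Spec(\pi_{\overline{\omega}}(H))$.
   Context: Let $\mathfrak{A}_0$ be a unital C*-algebra with C*-norm $\|\cdot\|_0$ and unit $I$, and $\|\cdot\|$ another norm on $\mathfrak{A}_0$ with $\|A\|\le\|A\|_0$, $\|AB\|\le\|A\|\,\|B\|_0$, $\|A^*\|=\|A\|$. $\mathfrak{A}$ is the $\|\cdot\|$-completion of $\mathfrak{A}_0$, with $XA:=\lim A_nA$, $AX:=\lim AA_n$, $X^*:=\lim A_n^*$ for $X\in\mathfrak{A}$, $A\in\mathfrak{A}_0$, $A_n\in\mathfrak{A}_0$, $\|A_n-X\|\to0$. $E(\mathfrak{A}_0)$ is the set of positive linear functionals $\omega$ on $\mathfrak{A}_0$ with $\omega(I)=1$ and $|\omega(A)|\le\gamma\|A\|$ for some $\gamma>0$; $\overline{\omega}$ is its continuous extension to $\mathfrak{A}$. $(\pi_\omega,\lambda_\omega,\mathcal{H}_\omega)$ is the GNS construction of $\omega$ on $\mathfrak{A}_0$ ($\lambda_\omega:\mathfrak{A}_0\to\mathcal{H}_\omega$ linear with dense range, $(\lambda_\omega(A)|\lambda_\omega(B))=\omega(B^*A)$).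 For $X\in\mathfrak{A}$ and $B\in\mathfrak{A}_0$, $\pi_{\overline{\omega}}(X)\lambda_\omega(B)$ is the conjugate-linear functional on $\lambda_\omega(\mathfrak{A}_0)$ given by $\langle\pi_{\overline{\omega}}(X)\lambda_\omega(B),\lambda_\omega(C)\rangle=\overline{\omega}(C^*XB)$, $C\in\mathfrak{A}_0$. Such a functional $v$ is bounded if it extends continuously to $\mathcal{H}_\omega$, and then $[v]\in\mathcal{H}_\omega$ is the vector with $\langle v,\eta\rangle=([v]|\eta)$. For $A\in\mathfrak{A}_0$, $\delta_H(A):=i(HA-AH)\in\mathfrak{A}$. $\overline{\omega}$ is a ground state for $H$ (with eigenvalue $\alpha_*$) if (a) $\overline{\omega}(AH)=\alpha_*\overline{\omega}(A)$ for all $A\in\mathfrak{A}_0$, and (b) $\langle\pi_{\overline{\omega}}(H)\lambda_\omega(B),\lambda_\omega(B)\rangle\ge\alpha_*(\lambda_\omega(B)|\lambda_\omega(B))$ for all $B\in\mathfrak{A}_0$. $Spec(\pi_{\overline{\omega}}(H))$ is the set of $\alpha\in\mathbb{C}$ for which there is $B\in\mathfrak{A}_0$ with $\lambda_\omega(B)\ne0$, $\pi_{\overline{\omega}}(H)\lambda_\omega(B)$ bounded and $[\pi_{\overline{\omega}}(H)\lambda_\omega(B)]=\alpha\lambda_\omega(B)$. *)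

From HB Require Import structures.
From mathcomp Require Import all_boot all_order all_algebra.
From mathcomp Require Import complex reals.
Set Implicit Arguments. Unset Strict Implicit. Unset Printing Implicit Defensive.
Import Order.TTheory GRing.Theory Num.Theory.
Local Open Scope ring_scope.

Definition cabs {R : realType} (c : R[i]) : R := ComplexField.Normc.normc c.

Definition tends0 {R : realType} (s : nat -> R) : Prop :=
  forall e : R, 0 < e -> exists N : nat, forall k, (N <= k)%N -> `|s k| < e.

Definition is_norm {R : realType} (V : lmodType R[i]) (nV : V -> R) : Prop :=
  (forall x, 0 <= nV x) /\
  (forall x, nV x = 0 -> x = 0) /\
  (forall x y, nV (x + y) <= nV x + nV y) /\
  (forall (c : R[i]) x, nV (c *: x) = cabs c * nV x).

Definition complete_wrt {R : realType} (V : zmodType) (nV : V -> R) : Prop :=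
  forall u : nat -> V,
    (forall e : R, 0 < e -> exists N : nat, forall m k, (N <= m)%N -> (N <= k)%N ->
        nV (u m - u k) < e) ->
    exists l : V, tends0 (fun k => nV (u k - l)).

Definition unital_Cstar {R : realType} (A0 : algType R[i]) (star : A0 -> A0)
  (n0 : A0 -> R) : Prop :=
  (forall a, star (star a) = a) /\
  (forall a b, star (a + b) = star a + star b) /\
  (forall (c : R[i]) a, star (c *: a) = conjc c *: star a) /\
  (forall a b, star (a * b) = star b * star a) /\
  is_norm n0 /\
  complete_wrt n0 /\
  (forall a b, n0 (a * b) <= n0 a * n0 b) /\
  (forall a, n0 (star a * a) = n0 a ^+ 2).

Definition CQ_norm {R : realType} (A0 : algType R[i]) (star : A0 -> A0)
  (n0 n : A0 -> R) : Prop :=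
  is_norm n /\
  (forall a, n a <= n0 a) /\
  (forall a b, n (a * b) <= n a * n0 b) /\
  (forall a, n (star a) = n a).

Definition is_completion {R : realType} (A0 : algType R[i]) (n : A0 -> R)
  (X : lmodType R[i]) (nX : X -> R) (j : A0 -> X) : Prop :=
  is_norm nX /\
  complete_wrt nX /\
  (forall (c : R[i]) a b, j (c *: a + b) = c *: j a + j b) /\
  (forall a, nX (j a) = n a) /\
  (forall x : X, exists u : nat -> A0, tends0 (fun k => nX (j (u k) - x))).

(* X A := lim A_n A,  A X := lim A A_n,  X^* := lim A_n^*  whenever A_n -> X *)
Definition completion_ops {R : realType} (A0 : algType R[i]) (star : A0 -> A0)
  (X : lmodType R[i]) (nX : X -> R) (j : A0 -> X)
  (mulXA : X -> A0 -> X) (mulAX : A0 -> X -> X) (starX : X -> X) : Prop :=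
  forall (x : X) (u : nat -> A0), tends0 (fun k => nX (j (u k) - x)) ->
    (forall a, tends0 (fun k => nX (j (u k * a) - mulXA x a))) /\
    (forall a, tends0 (fun k => nX (j (a * u k) - mulAX a x))) /\
    tends0 (fun k => nX (j (star (u k)) - starX x)).

Definition CQstar_algebra {R : realType} (A0 : algType R[i]) (star : A0 -> A0)
  (n0 n : A0 -> R) (X : lmodType R[i]) (nX : X -> R) (j : A0 -> X)
  (mulXA : X -> A0 -> X) (mulAX : A0 -> X -> X) (starX : X -> X) : Prop :=
  unital_Cstar star n0 /\ CQ_norm star n0 n /\ is_completion n nX j /\
  completion_ops star nX j mulXA mulAX starX.

Definition in_E {R : realType} (A0 : algType R[i]) (star : A0 -> A0) (n : A0 -> R)
  (omega : A0 -> R[i]) : Prop :=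
  (forall (c : R[i]) a b, omega (c *: a + b) = c * omega a + omega b) /\
  (forall a, 0 <= omega (star a * a)) /\
  omega 1 = 1 /\
  exists gamma : R, 0 < gamma /\ forall a, cabs (omega a) <= gamma * n a.

Definition cont_extension {R : realType} (A0 : algType R[i]) (X : lmodType R[i])
  (nX : X -> R) (j : A0 -> X) (omega : A0 -> R[i]) (omegab : X -> R[i]) : Prop :=
  forall (x : X) (u : nat -> A0), tends0 (fun k => nX (j (u k) - x)) ->
    tends0 (fun k => cabs (omega (u k) - omegab x)).

Definition hnorm {R : realType} (Hw : lmodType R[i]) (ip : Hw -> Hw -> R[i])
  (xi : Hw) : R := Num.sqrt (complex.Re (ip xi xi)).

(* (lambda_omega, H_omega) of the GNS construction of omega: H_omega = (Hw, ip) is a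
   Hilbert space (ip linear in the first, conjugate linear in the second variable),
   lam : A0 -> Hw linear with dense range, (lam a | lam b) = omega (b^* a). *)
Definition is_GNS {R : realType} (A0 : algType R[i]) (star : A0 -> A0)
  (omega : A0 -> R[i]) (Hw : lmodType R[i]) (ip : Hw -> Hw -> R[i])
  (lam : A0 -> Hw) : Prop :=
  (forall (c : R[i]) x y z, ip (c *: x + y) z = c * ip x z + ip y z) /\
  (forall x y, ip y x = conjc (ip x y)) /\
  (forall x, 0 <= ip x x) /\
  (forall x, ip x x = 0 -> x = 0) /\
  complete_wrt (hnorm ip) /\
  (forall (c : R[i]) a b, lam (c *: a + b) = c *: lam a + lam b) /\
  (forall a b, ip (lam a) (lam b) = omega (star b * a)) /\
  (forall xi : Hw, exists u : nat -> A0, tends0 (fun k => hnorm ip (lam (u k) - xi))).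

(* <pi_omegab(X) lam(B), lam(C)> = omegab(C^* X B) *)
Definition pi_fun {R : realType} (A0 : algType R[i]) (star : A0 -> A0)
  (X : lmodType R[i]) (mulXA : X -> A0 -> X) (mulAX : A0 -> X -> X)
  (omegab : X -> R[i]) (x : X) (b : A0) : A0 -> R[i] :=
  fun c => omegab (mulXA (mulAX (star c) x) b).

(* The conjugate-linear functional v on lam(A0) (lam c |-> v c) is bounded, i.e. it
   extends to a continuous f on Hw, and [v] = eta, i.e. <v, xi> = (eta | xi) for all
   xi in Hw (where <v, .> denotes the continuous extension f). *)
Definition bounded_with_vector {R : realType} (A0 : algType R[i])
  (Hw : lmodType R[i]) (ip : Hw -> Hw -> R[i]) (lam : A0 -> Hw)
  (v : A0 -> R[i]) (eta : Hw) : Prop :=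
  exists f : Hw -> R[i],
    (forall c, f (lam c) = v c) /\
    (forall xi (e : R), 0 < e -> exists d : R, 0 < d /\
        forall zeta, hnorm ip (zeta - xi) < d -> cabs (f zeta - f xi) < e) /\
    (forall xi, f xi = ip eta xi).

Definition Spec {R : realType} (A0 : algType R[i]) (star : A0 -> A0)
  (X : lmodType R[i]) (mulXA : X -> A0 -> X) (mulAX : A0 -> X -> X)
  (omegab : X -> R[i]) (Hw : lmodType R[i]) (ip : Hw -> Hw -> R[i])
  (lam : A0 -> Hw) (h : X) (alpha : R[i]) : Prop :=
  exists b : A0, lam b <> 0 /\
    bounded_with_vector ip lam (pi_fun star mulXA mulAX omegab h b) (alpha *: lam b).

Definition ground_state {R : realType} (A0 : algType R[i]) (star : A0 -> A0)
  (X : lmodType R[i]) (j : A0 -> X) (mulXA : X -> A0 -> X) (mulAX : A0 -> X -> X)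
  (omegab : X -> R[i]) (Hw : lmodType R[i]) (ip : Hw -> Hw -> R[i])
  (lam : A0 -> Hw) (h : X) (alpha : R[i]) : Prop :=
  (forall a, omegab (mulAX a h) = alpha * omegab (j a)) /\
  (forall b, alpha * ip (lam b) (lam b) <= pi_fun star mulXA mulAX omegab h b b).

Definition deltaH {R : realType} (A0 : algType R[i]) (X : lmodType R[i])
  (mulXA : X -> A0 -> X) (mulAX : A0 -> X -> X) (h : X) (a : A0) : X :=
  'i%C *: (mulXA h a - mulAX a h).

From mathcomp Require Import all_boot all_order all_algebra.
From mathcomp Require Import complex reals ring lra.
Import Order.TTheory GRing.Theory Num.Theory.
Set Implicit Arguments. Unset Strict Implicit.
Local Open Scope ring_scope.

(* By density of A0 and continuity, the rules of the *-algebra A0 pass to the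
   extended products and to the extended state, which is hermitian because
   omega is positive.  Condition (a) at A = 1 gives alpha = omegab(H), which is
   real since H = H^*; hermiticity then turns (a) into omegab(H A) = alpha omega(A),
   so omegab(delta_H(A)) = 0, and -i omegab(A^* delta_H(A)) = omegab(A^* H A) -
   alpha omega(A^* A), which is nonnegative by (b).  Finally lambda(1) is an
   eigenvector of pi(H) for alpha, while an eigenvector lambda(B) for beta gives
   beta |lambda(B)|^2 = omegab(B^* H B) >= alpha |lambda(B)|^2. *)

Section Tends0.
Variable R : realType.
Implicit Types s t : nat -> R.

Lemma eq_tends0 s t : (forall k, s k = t k) -> tends0 s -> tends0 t.
Proof. by move=> st hs e /hs[N hN]; exists N => k /hN; rewrite st. Qed.

Lemma tends0D s t : tends0 s -> tends0 t -> tends0 (fun k => s k + t k).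
Proof.
move=> hs ht e e_gt0; have e2_gt0 : 0 < e / 2 by rewrite divr_gt0.
have [N1 hN1] := hs _ e2_gt0; have [N2 hN2] := ht _ e2_gt0.
exists (maxn N1 N2) => k; rewrite geq_max => /andP[/hN1 hs1 /hN2 ht2].
by rewrite (splitr e); apply: le_lt_trans (ler_normD _ _) (ltrD hs1 ht2).
Qed.

Lemma tends0Ml (c : R) s : tends0 s -> tends0 (fun k => c * s k).
Proof.
move=> hs e e_gt0; have c1_gt0 : 0 < `|c| + 1 by rewrite ltr_wpDl.
have [N hN] := hs _ (divr_gt0 e_gt0 c1_gt0); exists N => k /hN hsk.
rewrite normrM (le_lt_trans (ler_wpM2l (normr_ge0 c) (ltW hsk))) //.
by rewrite mulrA ltr_pdivrMr // mulrC ltr_pM2l // ltrDl.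
Qed.

Lemma tends0_le s t : tends0 s -> (forall k, `|t k| <= s k) -> tends0 t.
Proof.
move=> hs ts e /hs[N hN]; exists N => k /hN hsk.
exact: le_lt_trans (ts k) (le_lt_trans (ler_norm _) hsk).
Qed.

Lemma tends0_cst (c : R) : tends0 (fun => c) -> c = 0.
Proof.
move=> hc; apply/eqP/negPn/negP; rewrite -normr_gt0 => /hc[N /(_ N (leqnn N))].
by rewrite ltxx.
Qed.

End Tends0.

Lemma cabs0 (R : realType) : cabs (0 : R[i]) = 0.
Proof. exact: ComplexField.Normc.normc0. Qed.

Lemma cabs_is_norm (R : realType) : is_norm (@cabs R : R[i] -> R).
Proof.
split; first by case=> a b; rewrite /cabs sqrtr_ge0.
split; first exact: ComplexField.Normc.eq0_normc.
split; first exact: le_normcD.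
exact: ComplexField.Normc.normcM.
Qed.

Lemma cabsJ (R : realType) (z : R[i]) : cabs (conjc z) = cabs z.
Proof. by case: z => a b; rewrite /cabs /= sqrrN. Qed.

Definition norm_cvg (R : realType) (V : zmodType) (nV : V -> R) (u : nat -> V) (l : V) :=
  tends0 (fun k => nV (u k - l)).

Section NormedModule.
Variables (R : realType) (V : lmodType R[i]) (nV : V -> R).
Hypothesis nV_norm : is_norm nV.

Lemma normv0 : nV 0 = 0.
Proof. by case: nV_norm => _ [_ [_ nVZ]]; rewrite -(scale0r 0) nVZ cabs0 mul0r. Qed.

Lemma normvN x : nV (- x) = nV x.
Proof.
case: nV_norm => _ [_ [_ nVZ]].
by rewrite -scaleN1r nVZ /cabs normcN ComplexField.Normc.normc1 mul1r.
Qed.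

Lemma norm_cvg_cst x : norm_cvg nV (fun => x) x.
Proof. by move=> e e_gt0; exists 0%N => k _; rewrite subrr normv0 normr0. Qed.

Lemma norm_cvg_uniq u v x y :
  (forall k, u k = v k) -> norm_cvg nV u x -> norm_cvg nV v y -> x = y.
Proof.
case: nV_norm => nV_ge0 [nV_eq0 [nVD _]] uv ux vy; apply/eqP; rewrite -subr_eq0.
apply/eqP/nV_eq0/tends0_cst/(tends0_le (tends0D ux vy)) => k.
rewrite ger0_norm // -uv -(normvN (u k - x)).
by rewrite (_ : x - y = - (u k - x) + (u k - y)) ?nVD // opprB addrA subrK.
Qed.

Lemma norm_cvg_lincomb (c : R[i]) u v x y : norm_cvg nV u x -> norm_cvg nV v y ->
  norm_cvg nV (fun k => c *: u k + v k) (c *: x + y).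
Proof.
case: nV_norm => nV_ge0 [_ [nVD nVZ]] ux vy.
apply: (tends0_le (tends0D (tends0Ml (cabs c) ux) vy)) => k.
rewrite ger0_norm // -nVZ -[_ - _](_ : c *: (u k - x) + (v k - y) = _) ?nVD //.
by rewrite scalerBr opprD addrACA.
Qed.

End NormedModule.

Section LinearCombination.
Variables (R : realType) (V W : lmodType R[i]) (f : V -> W).
Hypothesis f_lincomb : forall (c : R[i]) x y, f (c *: x + y) = c *: f x + f y.

Lemma lincomb0 : f 0 = 0.
Proof. by apply: (addrI (f 0)); rewrite -{1}(scale1r (f 0)) -f_lincomb scale1r !addr0. Qed.

Lemma lincombZ c x : f (c *: x) = c *: f x.
Proof. by rewrite -[c *: x]addr0 f_lincomb lincomb0 addr0. Qed.

Lemma lincombD x y : f (x + y) = f x + f y.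
Proof. by rewrite -[x in LHS]scale1r f_lincomb scale1r. Qed.

Lemma lincombB x y : f (x - y) = f x - f y.
Proof. by rewrite lincombD -scaleN1r lincombZ scaleN1r. Qed.

End LinearCombination.

Section InnerProduct.
Variables (R : realType) (Hw : lmodType R[i]) (ip : Hw -> Hw -> R[i]).
Hypothesis ip_lincomb : forall (c : R[i]) x y z, ip (c *: x + y) z = c * ip x z + ip y z.
Hypothesis ip_sym : forall x y, ip y x = conjc (ip x y).
Hypothesis ip_ge0 : forall x, 0 <= ip x x.
Hypothesis ip_eq0 : forall x, ip x x = 0 -> x = 0.

Let ipl_lincomb z (c : R[i]) x y : ip (c *: x + y) z = c *: ip x z + ip y z.
Proof. exact: ip_lincomb. Qed.

Lemma ip0l z : ip 0 z = 0.
Proof. exact: (lincomb0 (f := ip^~ z) (ipl_lincomb z)). Qed.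

Lemma ipZl c x z : ip (c *: x) z = c * ip x z.
Proof. exact: (lincombZ (f := ip^~ z) (ipl_lincomb z)). Qed.

Lemma ipBl x y z : ip (x - y) z = ip x z - ip y z.
Proof. exact: (lincombB (f := ip^~ z) (ipl_lincomb z)). Qed.

Lemma ip0r z : ip z 0 = 0.
Proof. by rewrite ip_sym ip0l rmorph0. Qed.

Lemma ipZr c x z : ip z (c *: x) = conjc c * ip z x.
Proof. by rewrite ip_sym ipZl rmorphM /= -ip_sym. Qed.

Lemma ipBr x y z : ip z (x - y) = ip z x - ip z y.
Proof. by rewrite ip_sym ipBl rmorphB /= -!ip_sym. Qed.

Lemma ip_CauchySchwarz x y : cabs (ip x y) <= hnorm ip x * hnorm ip y.
Proof.
have [yy0|yy_neq0] := eqVneq (ip y y) 0.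
  by rewrite (ip_eq0 yy0) ip0r cabs0 mulr_ge0 ?sqrtr_ge0.
set p := ip x y.
have yy_real : conjc (ip y y) = ip y y by rewrite -ip_sym.
(* Expand [0 <= (x - c y | x - c y)] for the projection coefficient [c = p / (y | y)]. *)
have proj_ge0 : 0 <= ip x x - p * conjc p / ip y y.
  rewrite (_ : _ - _ = ip (x - (ip y y)^-1 * p *: y) (x - (ip y y)^-1 * p *: y)) //.
  rewrite !ipBl !ipBr !ipZl !ipZr -/p [ip y x]ip_sym -/p rmorphM /= conjc_inv yy_real.
  by field.
have pp_le : p * conjc p <= ip x x * ip y y.
  by have := mulr_ge0 proj_ge0 (ip_ge0 y); rewrite mulrBl mulfVK // subr_ge0.
have xx_Im := ger0_Im (ip_ge0 x); have yy_Im := ger0_Im (ip_ge0 y).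
have xx_Re : 0 <= complex.Re (ip x x) by move: (ip_ge0 x); rewrite lecE => /andP[].
rewrite /hnorm -sqrtrM // /cabs.
move: pp_le xx_Im yy_Im; rewrite lecE; clear proj_ge0; clearbody p.
case: (ip x x) (ip y y) p => [a b] [a' b'] [c d] /= /andP[_ pp_le] b0 b'0.
by subst b b'; apply: ler_wsqrtr; move: pp_le => /=; nra.
Qed.

Lemma ip_continuous eta xi (e : R) : 0 < e -> exists d : R, 0 < d /\
  forall zeta, hnorm ip (zeta - xi) < d -> cabs (ip eta zeta - ip eta xi) < e.
Proof.
move=> e_gt0; have n1_gt0 : 0 < hnorm ip eta + 1 by rewrite ltr_wpDl ?sqrtr_ge0.
exists (e / (hnorm ip eta + 1)); split=> [|zeta hzeta]; first by rewrite divr_gt0.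
rewrite -ipBr (le_lt_trans (ip_CauchySchwarz _ _)) //.
rewrite (le_lt_trans (ler_wpM2l (sqrtr_ge0 _) (ltW hzeta))) //.
by rewrite mulrA ltr_pdivrMr // mulrC ltr_pM2l // ltrDl.
Qed.

End InnerProduct.

Section Star.
Variables (R : realType) (A0 : algType R[i]) (star : A0 -> A0).
Hypothesis star_invol : forall a, star (star a) = a.
Hypothesis starD : forall a b, star (a + b) = star a + star b.
Hypothesis starZ : forall (c : R[i]) a, star (c *: a) = conjc c *: star a.
Hypothesis starM : forall a b, star (a * b) = star b * star a.

Lemma star1 : star 1 = 1.
Proof. by have := starM (star 1) 1; rewrite mulr1 star_invol mulr1. Qed.

Variable omega : A0 -> R[i].
Hypothesis omega_lincomb : forall (c : R[i]) a b, omega (c *: a + b) = c * omega a + omega b.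
Hypothesis omega_ge0 : forall a, 0 <= omega (star a * a).
Hypothesis omega1 : omega 1 = 1.

(* Positivity on [a + 1] and [a + i] forces the imaginary parts of
   [omega (star a) + omega a] and [i (omega (star a) - omega a)] to vanish. *)
Lemma positive_hermitian a : omega (star a) = conjc (omega a).
Proof.
have omegaD x y : omega (x + y) = omega x + omega y.
  exact: (lincombD (f := omega) omega_lincomb).
have omegaZ c x : omega (c *: x) = c * omega x.
  exact: (lincombZ (f := omega) omega_lincomb).
have Im_a1 := ger0_Im (omega_ge0 (a + 1)).
have Im_ai := ger0_Im (omega_ge0 (a + 'i%C *: 1)).
have Im_a := ger0_Im (omega_ge0 a).
rewrite starD star1 mulrDl !mulrDr mul1r !mulr1 !omegaD omega1 in Im_a1.
rewrite starD starZ star1 mulrDl !mulrDr -!scalerAr -!scalerAl !mulr1 mul1r scalerA in Im_ai.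
rewrite !omegaD !omegaZ omega1 in Im_ai.
move: Im_a Im_a1 Im_ai.
case: (omega (star a * a)) (omega (star a)) (omega a) => [p1 p2] [s1 s2] [t1 t2] /=.
by move=> *; congr Complex; lra.
Qed.

End Star.

Section Completion.
Variables (R : realType) (A0 : algType R[i]) (star : A0 -> A0).
Variables (X : lmodType R[i]) (nX : X -> R) (j : A0 -> X).
Variables (mulXA : X -> A0 -> X) (mulAX : A0 -> X -> X) (starX : X -> X).
Hypothesis nX_norm : is_norm nX.
Hypothesis j_lincomb : forall (c : R[i]) a b, j (c *: a + b) = c *: j a + j b.
Hypothesis j_dense : forall x : X, exists u : nat -> A0, norm_cvg nX (j \o u) x.
Hypothesis ops : completion_ops star nX j mulXA mulAX starX.

Let cvgX (u : nat -> A0) (x : X) := norm_cvg nX (j \o u) x.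

(* Each identity of this section is proved by computing both sides as limits
   along one sequence of A0 approximating the elements of X involved. *)
Let cvgX_uniq u v x y : (forall k, u k = v k) -> cvgX u x -> cvgX v y -> x = y.
Proof.
move=> uv; apply: (norm_cvg_uniq nX_norm (u := j \o u) (v := j \o v)) => k /=.
by rewrite uv.
Qed.

Let cvgX_mulXA u x a : cvgX u x -> cvgX (fun k => u k * a) (mulXA x a).
Proof. by case/ops=> + _; apply. Qed.

Let cvgX_mulAX u x a : cvgX u x -> cvgX (fun k => a * u k) (mulAX a x).
Proof. by case/ops=> _ [+ _]; apply. Qed.

Let cvgX_star u x : cvgX u x -> cvgX (star \o u) (starX x).
Proof. by case/ops=> _ []. Qed.

Let cvgX_lincomb (c : R[i]) u v x y :
  cvgX u x -> cvgX v y -> cvgX (fun k => c *: u k + v k) (c *: x + y).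
Proof.
move=> ux vy; apply: eq_tends0 (norm_cvg_lincomb nX_norm c ux vy) => k.
by rewrite /= j_lincomb.
Qed.

Lemma mulAX_lincomb a (c : R[i]) x y :
  mulAX a (c *: x + y) = c *: mulAX a x + mulAX a y.
Proof.
have [u ux] := j_dense x; have [v vy] := j_dense y.
apply: cvgX_uniq (cvgX_mulAX a (cvgX_lincomb c ux vy))
  (cvgX_lincomb c (cvgX_mulAX a ux) (cvgX_mulAX a vy)) => k.
by rewrite mulrDr -scalerAr.
Qed.

Lemma mulAX_mulXA a x b : mulAX a (mulXA x b) = mulXA (mulAX a x) b.
Proof.
have [u ux] := j_dense x.
by apply: cvgX_uniq (cvgX_mulAX a (cvgX_mulXA b ux)) (cvgX_mulXA b (cvgX_mulAX a ux)) => k;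
  rewrite mulrA.
Qed.

Lemma mulAX_mul a b x : mulAX a (mulAX b x) = mulAX (a * b) x.
Proof.
have [u ux] := j_dense x.
by apply: cvgX_uniq (cvgX_mulAX a (cvgX_mulAX b ux)) (cvgX_mulAX (a * b) ux) => k;
  rewrite mulrA.
Qed.

Lemma mul1AX x : mulAX 1 x = x.
Proof. by have [u ux] := j_dense x; apply: cvgX_uniq (cvgX_mulAX 1 ux) ux => k; rewrite mul1r. Qed.

Lemma mulXA1 x : mulXA x 1 = x.
Proof. by have [u ux] := j_dense x; apply: cvgX_uniq (cvgX_mulXA 1 ux) ux => k; rewrite mulr1. Qed.

Hypothesis starM : forall a b, star (a * b) = star b * star a.

Lemma starX_mulXA x a : starX (mulXA x a) = mulAX (star a) (starX x).
Proof.
have [u ux] := j_dense x.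
by apply: cvgX_uniq (cvgX_star (cvgX_mulXA a ux)) (cvgX_mulAX (star a) (cvgX_star ux)) => k;
  rewrite /= starM.
Qed.

Variables (omega : A0 -> R[i]) (omegab : X -> R[i]).
Hypothesis omega_lincomb : forall (c : R[i]) a b, omega (c *: a + b) = c * omega a + omega b.
Hypothesis omegab_ext : cont_extension nX j omega omegab.

Let omegab_cvg u x : cvgX u x -> norm_cvg (@cabs R) (omega \o u) (omegab x).
Proof. exact: omegab_ext. Qed.

Lemma cont_extension_j a : omegab (j a) = omega a.
Proof.
apply/esym/(norm_cvg_uniq (cabs_is_norm R) (fun=> erefl) (norm_cvg_cst (cabs_is_norm R) _)).
exact: (omegab_cvg (u := fun => a)) (norm_cvg_cst nX_norm (j a)).
Qed.

Lemma cont_extension_lincomb (c : R[i]) x y : omegab (c *: x + y) = c * omegab x + omegab y.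
Proof.
have [u ux] := j_dense x; have [v vy] := j_dense y.
apply: (norm_cvg_uniq (cabs_is_norm R) _ (omegab_cvg (cvgX_lincomb c ux vy))
  (norm_cvg_lincomb (cabs_is_norm R) c (omegab_cvg ux) (omegab_cvg vy))) => k.
exact: omega_lincomb.
Qed.

Hypothesis omega_hermitian : forall a, omega (star a) = conjc (omega a).

Lemma cont_extension_starX x : omegab (starX x) = conjc (omegab x).
Proof.
have [u ux] := j_dense x.
apply: (norm_cvg_uniq (cabs_is_norm R) (fun=> erefl) (omegab_cvg (cvgX_star ux))).
by apply: eq_tends0 (omegab_cvg ux) => k; rewrite /= omega_hermitian -rmorphB cabsJ.
Qed.

End Completion.

Section GroundState.
Variables (R : realType) (A0 : algType R[i]) (star : A0 -> A0) (n0 n : A0 -> R).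
Variables (X : lmodType R[i]) (nX : X -> R) (j : A0 -> X).
Variables (mulXA : X -> A0 -> X) (mulAX : A0 -> X -> X) (starX : X -> X).
Variables (omega : A0 -> R[i]) (omegab : X -> R[i]).
Variables (Hw : lmodType R[i]) (ip : Hw -> Hw -> R[i]) (lam : A0 -> Hw).
Variables (H : X) (alpha : R[i]).
Hypothesis CQ : CQstar_algebra star n0 n nX j mulXA mulAX starX.
Hypothesis H_selfadjoint : starX H = H.
Hypothesis omega_E : in_E star n omega.
Hypothesis omegab_ext : cont_extension nX j omega omegab.
Hypothesis GNS : is_GNS star omega ip lam.
Hypothesis ground : ground_state star j mulXA mulAX omegab ip lam H alpha.

Let ground_mulAX a : omegab (mulAX a H) = alpha * omegab (j a).
Proof. by case: ground. Qed.

Let ground_ge a : alpha * ip (lam a) (lam a) <= pi_fun star mulXA mulAX omegab H a a.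
Proof. by case: ground. Qed.

Let ip_lam a b : ip (lam a) (lam b) = omega (star b * a).
Proof. by case: GNS => _ [_ [_ [_ [_ [_ []]]]]]. Qed.

Let ip_lincomb (c : R[i]) x y z : ip (c *: x + y) z = c * ip x z + ip y z.
Proof. by case: GNS. Qed.

Let ip_ge0 x : 0 <= ip x x.
Proof. by case: GNS => _ [_ []]. Qed.

Let ip_eq0 x : ip x x = 0 -> x = 0.
Proof. by case: GNS => _ [_ [_ [+ _]]]; apply. Qed.

Let ip_sym x y : ip y x = conjc (ip x y).
Proof. by case: GNS => _ []. Qed.

Let star_invol a : star (star a) = a.
Proof. by case: CQ; case. Qed.

Let starM a b : star (a * b) = star b * star a.
Proof. by case: CQ; case=> _ [_ [_ []]]. Qed.

Let nX_norm : is_norm nX.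
Proof. by case: CQ => _ [_ [[]]]. Qed.

Let j_dense x : exists u : nat -> A0, norm_cvg nX (j \o u) x.
Proof. by case: CQ => _ [_ [[_ [_ [_ [_ +]]]] _]]; apply. Qed.

Let j_lincomb (c : R[i]) a b : j (c *: a + b) = c *: j a + j b.
Proof. by case: CQ => _ [_ [[_ [_ [+ _]]] _]]; apply. Qed.

Let ops : completion_ops star nX j mulXA mulAX starX.
Proof. by case: CQ => _ [_ []]. Qed.

Let omega_lincomb (c : R[i]) a b : omega (c *: a + b) = c * omega a + omega b.
Proof. by case: omega_E => + _; apply. Qed.

Let omega1 : omega 1 = 1.
Proof. by case: omega_E => _ [_ []]. Qed.

Let omegab_j a : omegab (j a) = omega a.
Proof. exact: (cont_extension_j nX_norm omegab_ext). Qed.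

Let omegab_lincomb (c : R[i]) x y : omegab (c *: x + y) = c * omegab x + omegab y.
Proof.
exact: (cont_extension_lincomb nX_norm j_lincomb j_dense omega_lincomb omegab_ext).
Qed.

Let omega_hermitian a : omega (star a) = conjc (omega a).
Proof.
case: CQ omega_E => [[_ [starD [starZ _]]] _] [_ [omega_ge0 _]].
exact: (positive_hermitian star_invol starD starZ starM omega_lincomb omega_ge0 omega1 a).
Qed.

Let omegab_starX x : omegab (starX x) = conjc (omegab x).
Proof. exact: (cont_extension_starX j_dense ops omegab_ext omega_hermitian x). Qed.

Lemma ground_state_eigenvalueE : alpha = omegab H.
Proof. by have := ground_mulAX 1; rewrite (mul1AX nX_norm j_dense ops) omegab_j omega1 mulr1. Qed.

Lemma ground_state_eigenvalue_real : conjc alpha = alpha.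
Proof. by rewrite ground_state_eigenvalueE -omegab_starX H_selfadjoint. Qed.

Let mulAXZ a (c : R[i]) x : mulAX a (c *: x) = c *: mulAX a x.
Proof. exact: (lincombZ (mulAX_lincomb nX_norm j_lincomb j_dense ops a)). Qed.

Let mulAXB a x y : mulAX a (x - y) = mulAX a x - mulAX a y.
Proof. exact: (lincombB (mulAX_lincomb nX_norm j_lincomb j_dense ops a)). Qed.

Let omegabZ (c : R[i]) x : omegab (c *: x) = c * omegab x.
Proof. exact: (lincombZ (f := omegab) omegab_lincomb). Qed.

Let omegabB x y : omegab (x - y) = omegab x - omegab y.
Proof. exact: (lincombB (f := omegab) omegab_lincomb). Qed.

Lemma ground_state_mulXA a : omegab (mulXA H a) = alpha * omega a.
Proof.
rewrite -[LHS]conjcK -omegab_starX (starX_mulXA nX_norm j_dense ops starM) H_selfadjoint.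
by rewrite ground_mulAX omegab_j omega_hermitian rmorphM /= conjcK ground_state_eigenvalue_real.
Qed.

Lemma ground_state_deltaH a : omegab (deltaH mulXA mulAX H a) = 0.
Proof. by rewrite /deltaH omegabZ omegabB ground_state_mulXA ground_mulAX omegab_j subrr mulr0. Qed.

Lemma ground_state_commutator_ge0 a :
  0 <= - 'i%C * omegab (mulAX (star a) (deltaH mulXA mulAX H a)).
Proof.
rewrite /deltaH mulAXZ mulAXB omegabZ omegabB mulrA mulNr -expr2 sqr_i opprK mul1r.
rewrite (mulAX_mulXA nX_norm j_dense ops) (mulAX_mul nX_norm j_dense ops).
by rewrite ground_mulAX omegab_j -ip_lam subr_ge0; exact: ground_ge.
Qed.

Lemma ground_state_in_Spec : Spec star mulXA mulAX omegab ip lam H alpha.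
Proof.
exists 1; split.
  move=> lam1; have := ip_lam 1 1.
  rewrite lam1 (ip0l ip_lincomb) (star1 star_invol starM) mulr1 omega1 => /esym/eqP.
  by rewrite oner_eq0.
exists (ip (alpha *: lam 1)); split; [|split] => //.
  move=> c; rewrite /pi_fun (mulXA1 nX_norm j_dense ops) ground_mulAX omegab_j.
  by rewrite (ipZl ip_lincomb) ip_lam mulr1.
by move=> xi e; exact: (ip_continuous ip_lincomb ip_sym ip_ge0 ip_eq0).
Qed.

Lemma ground_state_Spec_min beta : Spec star mulXA mulAX omegab ip lam H beta -> alpha <= beta.
Proof.
move=> [b [lamb_neq0 [f [f_lam [_ f_ip]]]]].
have bb_gt0 : 0 < ip (lam b) (lam b).
  by rewrite lt_def ip_ge0 andbT; apply/eqP => /ip_eq0; exact: lamb_neq0.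
have := ground_ge b; rewrite -f_lam f_ip (ipZl ip_lincomb) -subr_ge0 -mulrBl.
by rewrite pmulr_lge0 // subr_ge0.
Qed.

End GroundState.

Theorem theorem5p8 (R : realType) (A0 : algType R[i]) (star : A0 -> A0)
  (n0 n : A0 -> R) (X : lmodType R[i]) (nX : X -> R) (j : A0 -> X)
  (mulXA : X -> A0 -> X) (mulAX : A0 -> X -> X) (starX : X -> X)
  (H : X) (omega : A0 -> R[i]) (omegab : X -> R[i])
  (Hw : lmodType R[i]) (ip : Hw -> Hw -> R[i]) (lam : A0 -> Hw)
  (alpha_star : R[i]) :
  CQstar_algebra star n0 n nX j mulXA mulAX starX ->
  starX H = H ->
  in_E star n omega ->
  cont_extension nX j omega omegab ->
  is_GNS star omega ip lam ->
  ground_state star j mulXA mulAX omegab ip lam H alpha_star ->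
  [/\ (forall a : A0,
         0 <= - 'i%C * omegab (mulAX (star a) (deltaH mulXA mulAX H a))),
      (forall a : A0, omegab (deltaH mulXA mulAX H a) = 0) &
      (Spec star mulXA mulAX omegab ip lam H alpha_star /\
       forall alpha, Spec star mulXA mulAX omegab ip lam H alpha -> alpha_star <= alpha)].
Proof.
move=> CQ H_selfadjoint omega_E omegab_ext GNS ground; split.
- exact: (ground_state_commutator_ge0 CQ omega_E omegab_ext GNS ground).
- exact: (ground_state_deltaH CQ H_selfadjoint omega_E omegab_ext ground).
- split; first exact: (ground_state_in_Spec CQ omega_E omegab_ext GNS ground).
  exact: (ground_state_Spec_min GNS ground).
Qed.
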